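(* Let $G$ be a dense $G_\delta$ subset of $2^\omega$, and let $T$ be the tree generated by a test. Then there are $\alpha_0\in G$ and a continuous map $f:2^\omega\to G$ such that for each $\alpha\in 2^\omega$: (a) $(\alpha_0,f(\alpha))\in[T]$; (b) for each $t\in\omega^{<\omega}$ and each $m\in\omega$: (i) if $\alpha(p(tm))=1$, then there is $m'\in\omega$ with $(\alpha_0\,\Delta\,f(\alpha))(p(tm')+1)=1$; (ii) if $(\alpha_0\,\Delta\,f(\alpha))(p(tm)+1)=1$, then there is $m'\in\omega$ with $\alpha(p(tm'))=1$.
   Context: Let $\varphi:\omega\to\omega^2$ be the bijection with inverse $\langle n,p\rangle:=\varphi^{-1}(n,p)=\left(\sum_{k\leq n+p}k\right)+p$, and write $\varphi(q)=((q)_0,(q)_1)$. A set $E\subseteq\bigcup_{q}2^q\times 2^q$ is a test if: (a) for each $q$ there is a unique $(s_q,t_q)\in E\cap(2^q\times 2^q)$; (b) for all $m,p\in\omega$ and $u\in 2^{<\omega}$ there is $v\in 2^{<\omega}$ with $(s_p0uv,t_p1uv)\in E$ and $(|t_p1uv|-1)_0=m$; (c) for each $n>0$ there are $q<n$ and $w\in 2^{<\omega}$ with $s_n=s_q0w$, $t_n=t_q1w$. The tree generated by $E$ is $T:=\{(s,t): s=t=\emptyset$ or $\exists q\ \exists w\in 2^{<\omega}\ (s,t)=(s_q0w,t_q1w)\}$, and $[T]$ is the set of $(\alpha,\beta)\in 2^\omega\times2^\omega$ with $(\alpha\upharpoonright r,\beta\upharpoonright r)\in T$ for all $r$. The map $p:\omega^{<\omega}\setminus\{\emptyset\}\to\omega$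 is defined by $p(s):=s(0)$ if $|s|=1$ and $p(s):=\langle p(s\upharpoonright(|s|-1)),s(|s|-1)\rangle$ otherwise; $tm$ denotes the sequence $t$ followed by $m$. $\alpha\,\Delta\,\beta\in 2^\omega$ is the symmetric difference: $(\alpha\,\Delta\,\beta)(k)=1$ iff $\alpha(k)\neq\beta(k)$. *)

From mathcomp Require Import all_boot.
Set Implicit Arguments. Unset Strict Implicit. Unset Printing Implicit Defensive.

Definition cantor := nat -> bool.

Definition restr (a : cantor) (r : nat) : seq bool := mkseq a r.

(* Topology of 2^omega (product topology), written out on basic clopen sets [s]. *)
Definition agree (a b : cantor) (r : nat) : Prop := forall i, i < r -> a i = b i.

Definition open_set (U : cantor -> Prop) : Prop :=
  forall a, U a -> exists r, forall b, agree a b r -> U b.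

Definition dense (D : cantor -> Prop) : Prop :=
  forall s : seq bool, exists a, D a /\ restr a (size s) = s.

Definition Gdelta (G : cantor -> Prop) : Prop :=
  exists U : nat -> cantor -> Prop,
    (forall n, open_set (U n)) /\ (forall a, G a <-> forall n, U n a).

Definition continuous_map (f : cantor -> cantor) : Prop :=
  forall a n, exists r, forall b, agree a b r -> agree (f a) (f b) n.

Definition pair (n p : nat) : nat := \sum_(k < (n + p).+1) k + p.

Fixpoint phi (q : nat) : nat * nat :=
  match q with
  | 0 => (0, 0)
  | q'.+1 => let: (n, p) := phi q' in
             if n is n'.+1 then (n', p.+1) else (p.+1, 0)
  end.

Lemma pair_phi q : pair (phi q).1 (phi q).2 = q.
Proof.
elim: q => [|q IH] /=; first by rewrite /pair big_ord_recr big_ord0.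
move: IH; case: (phi q) => n p /=; case: n => [|n] /= <-.
  rewrite /pair !add0n addn0 big_ord_recr /=. by rewrite !addn0 addnS.
by rewrite /pair addnS addSn !addnS.
Qed.

Definition phi0 (q : nat) : nat := (phi q).1.

(* p : omega^{<omega} \ {empty} -> omega; p(s) = s(0) if |s| = 1, and
   p(s) = <p(s restricted to |s|-1), last s> otherwise.
   (Value on the empty sequence is irrelevant; it is only applied to tm.) *)
Definition pcode (s : seq nat) : nat :=
  match s with
  | [::] => 0
  | h :: r => foldl pair h r
  end.

(* A test, given by its enumeration q |-> (s_q, t_q); E = {(s_q,t_q) | q}. *)
Definition is_test (s t : nat -> seq bool) : Prop :=
  (forall q, size (s q) = q /\ size (t q) = q) /\
  (forall (m p : nat) (u : seq bool), exists v : seq bool,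
      exists q, s q = s p ++ false :: u ++ v /\ t q = t p ++ true :: u ++ v /\
                phi0 (size (t p ++ true :: u ++ v) - 1) = m) /\
  (forall n, 0 < n -> exists q, exists w : seq bool,
      q < n /\ s n = s q ++ false :: w /\ t n = t q ++ true :: w).

Definition in_tree (s t : nat -> seq bool) (x y : seq bool) : Prop :=
  (x = [::] /\ y = [::]) \/
  exists q, exists w : seq bool, x = s q ++ false :: w /\ y = t q ++ true :: w.

Definition in_body (s t : nat -> seq bool) (a b : cantor) : Prop :=
  forall r, in_tree s t (restr a r) (restr b r).

Definition symdiff (a b : cantor) : cantor := fun k => a k != b k.

(* Enumerate the nodes of the binary tree breadth-first.  Every node x gets a
   stem, an initial segment of alpha0 (the stems form one increasing chain
   along the enumeration), and a test index q_x such that s_{q_x} 0 is a prefix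
   of the stem; exchanging that prefix for t_{q_x} 1 gives the flipped stem, and
   f(alpha) is the limit of the flipped stems along the branch alpha, so that
   (alpha0, f(alpha)) runs through T.  A left child inherits q_x; a right child
   of a node of depth k gets, by clause (b) with m = (k)_0, a longer test pair
   branching at q_x.  Hence alpha0 Delta f(alpha) is exactly the set of indices
   q_x along the branch, and the index created when alpha(k) = 1 is some y + 1
   with (y)_0 = (k)_0; since the numbers p(tm'), m' in omega, are exactly those
   with the first coordinate of p(tm), this gives (b).  Between two nodes the
   stem and its flip are both extended into the n-th open set of the G_delta,
   which puts alpha0 and every f(alpha) into G. *)

From mathcomp Require Import all_boot zify.
From Stdlib Require Import ClassicalEpsilon.

Lemma pairS n p : pair n p.+1 = (pair n.+1 p).+1.
Proof. by rewrite /pair !addnS addSn. Qed.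

Lemma pair0S p : pair p.+1 0 = (pair 0 p).+1.
Proof. by rewrite /pair !addn0 add0n big_ord_recr /= addnS. Qed.

Lemma phi_pair n p : phi (pair n p) = (n, p).
Proof.
move: {2}(n + p) (erefl (n + p)) => d; elim: d n p => [|d IHd] n p.
  by case: n p => [|?] [|?] // _; rewrite /pair big_ord_recr big_ord0.
elim: p n => [|p IHp] n Hd.
  by case: n Hd => [|n] // Hd; rewrite pair0S /= IHd //; lia.
by rewrite pairS /= IHp //; lia.
Qed.

Lemma pcode_rcons_phi0 {tt m y} : phi0 y = phi0 (pcode (rcons tt m)) ->
  exists m', pcode (rcons tt m') = y.
Proof.
case: tt => [|h r] /=; first by exists y.
have foldl_rcons k : foldl pair h (rcons r k) = pair (foldl pair h r) k.
  by rewrite -cats1 foldl_cat.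
rewrite foldl_rcons /phi0 phi_pair /= => E.
by exists (phi y).2; rewrite foldl_rcons -E pair_phi.
Qed.

Definition chain_limit (C : nat -> seq bool) : cantor := fun x => nth false (C x) x.

Lemma nth_prefix {T : eqType} (x0 : T) {s1 s2 : seq T} {i : nat} :
  prefix s1 s2 -> i < size s1 -> nth x0 s2 i = nth x0 s1 i.
Proof. by move=> /prefixP[w ->] lt_i; rewrite nth_cat lt_i. Qed.

Section ChainLimit.

Variable C : nat -> seq bool.
Hypothesis C_prefix : forall k, prefix (C k) (C k.+1).
Hypothesis C_size : forall k, k < size (C k).

Lemma chain_prefix {i j} : i <= j -> prefix (C i) (C j).
Proof. exact: (@homo_leq _ C (fun x y => prefix x y) (@prefix_refl _) (@prefix_trans _)). Qed.

Lemma nth_chain_limit K x : x < size (C K) -> chain_limit C x = nth false (C K) x.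
Proof.
move=> lt_x; rewrite /chain_limit; case: (leqP x K) => [le_xK|lt_Kx].
  by rewrite (nth_prefix false (chain_prefix le_xK) (C_size x)).
by rewrite (nth_prefix false (chain_prefix (ltnW lt_Kx)) lt_x).
Qed.

Lemma restr_chain_limit K r : r <= size (C K) -> restr (chain_limit C) r = take r (C K).
Proof.
move=> le_r; apply: (@eq_from_nth _ false) => [|i].
  by rewrite size_mkseq size_takel.
rewrite size_mkseq => lt_i; rewrite nth_mkseq // nth_take //.
by apply: nth_chain_limit; apply: leq_trans le_r.
Qed.

End ChainLimit.

Lemma restrD (a : cantor) n r :
  restr a (n + r) = restr a n ++ mkseq (fun i => a (n + i)) r.
Proof. by rewrite /restr /mkseq iotaD map_cat add0n -(addn0 n) iotaDl -map_comp addn0. Qed.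

Lemma agree_restr (a b : cantor) r : restr a r = restr b r -> agree a b r.
Proof. by move=> E i lt_i; have := congr1 (nth false ^~ i) E; rewrite !nth_mkseq. Qed.

Lemma open_set_bounded_meet (U : nat -> cantor -> Prop) n :
  (forall m, open_set (U m)) -> open_set (fun b => forall m, m <= n -> U m b).
Proof.
move=> U_open; elim: n => [|n IHn] a Ua.
  have [r Ur] := U_open 0 a (Ua 0 (leqnn 0)).
  by exists r => b ab m; rewrite leqn0 => /eqP ->; apply: Ur.
have [r1 Ur1] := IHn a (fun m le_m => Ua m (leqW le_m)).
have [r2 Ur2] := U_open n.+1 a (Ua _ (leqnn _)).
exists (maxn r1 r2) => b ab m; rewrite leq_eqVlt => /orP[/eqP ->|lt_m].
  by apply: Ur2 => i lt_i; apply: ab; rewrite leq_max lt_i orbT.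
by apply: (Ur1 b) => // i lt_i; apply: ab; rewrite leq_max lt_i.
Qed.

Lemma dense_open_extension (V : cantor -> Prop) : dense V -> open_set V ->
  forall rho, exists w, forall b, restr b (size (rho ++ w)) = rho ++ w -> V b.
Proof.
move=> V_dense V_open rho; have [a [Va a_rho]] := V_dense rho.
have [r Vr] := V_open a Va.
pose w := mkseq (fun i => a (size rho + i)) r.
have rho_w : rho ++ w = restr a (size rho + r) by rewrite restrD a_rho.
exists w => b; rewrite rho_w size_mkseq => /esym/agree_restr ab.
by apply: Vr => i lt_i; apply: ab; apply: leq_trans lt_i (leq_addl _ _).
Qed.

Section TestTree.

Variables s t : nat -> seq bool.
Hypothesis size_s : forall q, size (s q) = q.
Hypothesis size_t : forall q, size (t q) = q.
Hypothesis test_parent : forall n, 0 < n -> exists q w,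
  q < n /\ s n = s q ++ false :: w /\ t n = t q ++ true :: w.

Lemma in_tree_take q w r : in_tree s t (take r (s q ++ false :: w)) (take r (t q ++ true :: w)).
Proof.
elim/ltn_ind: q w r => q IH w r; case: (ltnP q r) => [lt_qr|le_rq].
  right; exists q, (take (r - q.+1) w).
  by rewrite !take_cat size_s size_t ltnNge (ltnW lt_qr) -subnSK.
case: r le_rq => [|r] le_rq; first by left; rewrite !take0.
have [q' [w' [lt_q' [sq tq]]]] := test_parent _ (leq_ltn_trans (leq0n r) le_rq).
by rewrite !takel_cat ?size_s ?size_t // sq tq; apply: IH.
Qed.

End TestTree.

Section Branching.

Variables X Y : nat -> seq bool.
Hypothesis XY0 : X 0 = Y 0.
Hypothesis size_XY : forall k, size (X k) = size (Y k).
Hypothesis XY_step : forall k, (X k.+1 = X k /\ Y k.+1 = Y k) \/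
  exists w, X k.+1 = X k ++ false :: w /\ Y k.+1 = Y k ++ true :: w.

Lemma branch_points k j :
  nth false (X k) j != nth false (Y k) j -> exists2 k', k' < k & size (X k') = j.
Proof.
elim: k => [|k IHk]; first by rewrite XY0 eqxx.
case: (XY_step k) => [[-> ->] /IHk[k' lt_k' <-]|[w [-> ->]]].
  by exists k' => //; apply: ltnW.
rewrite !nth_cat -size_XY; case: ltngtP => [_ /IHk[k' lt_k' <-]|lt_j|->].
- by exists k' => //; apply: ltnW.
- by rewrite -(subnSK lt_j) eqxx.
- by exists k.
Qed.

End Branching.

(* The breadth-first index of the node [a|k]: the children of [x] are [2x+1]
   and [2x+2]. *)
Fixpoint node (a : cantor) (k : nat) : nat :=
  if k is k'.+1 then (a k' + (node a k').*2).+1 else 0.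

Lemma odd_bit_double (b : bool) n : odd (b + n.*2) = b.
Proof. by rewrite oddD odd_double addbF oddb. Qed.

Lemma half_leq_self i : i./2 <= i.
Proof. by rewrite leq_half_double -addnn; lia. Qed.

(* The indices of depth d are 2^d - 1, ..., 2^(d+1) - 2. *)
Definition depth (x : nat) : nat := trunc_log 2 x.+1.

Lemma depthS i : depth i.+1 = (depth i./2).+1.
Proof. by rewrite /depth trunc_log2S. Qed.

Lemma depth_node a k : depth (node a k) = k.
Proof. by elim: k => //= k IHk; rewrite depthS half_bit_double IHk. Qed.

Lemma node_ge a k : k <= node a k.
Proof. by elim: k => //= k IHk; rewrite ltnS (leq_trans IHk) // -addnn addnA leq_addl. Qed.

Lemma node_agree {a b n k} : agree a b n -> k <= n -> node a k = node b k.
Proof. by move=> ab; elim: k => //= k IHk lt_k; rewrite IHk ?ab // ltnW. Qed.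

Section Construction.

Variables s t : nat -> seq bool.
Hypothesis size_s : forall q, size (s q) = q.
Hypothesis size_t : forall q, size (t q) = q.

Hypothesis test_parent : forall n, 0 < n -> exists q w,
  q < n /\ s n = s q ++ false :: w /\ t n = t q ++ true :: w.

Variable branch : nat -> nat -> seq bool -> seq bool * nat.
Hypothesis branch_s : forall m p u, s (branch m p u).2 = s p ++ false :: u ++ (branch m p u).1.
Hypothesis branch_t : forall m p u, t (branch m p u).2 = t p ++ true :: u ++ (branch m p u).1.
Hypothesis branch_phi0 : forall m p u, phi0 (branch m p u).2.-1 = m.

Variable pad : nat -> seq bool -> seq bool.
Variable V : nat -> cantor -> Prop.
Hypothesis padP : forall n rho b,
  restr b (size (rho ++ pad n rho)) = rho ++ pad n rho -> V n b.

Definition marked (q : nat) (x : seq bool) : Prop := exists w, x = s q ++ false :: w.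

Definition flip (q : nat) (x : seq bool) : seq bool := t q ++ true :: drop q.+1 x.

Lemma marked_size {q x} : marked q x -> q < size x.
Proof. by case=> w ->; rewrite size_cat size_s /= addnS ltnS leq_addr. Qed.

Lemma marked_prefix {q x y} : marked q x -> prefix x y -> marked q y.
Proof. by case=> w -> /prefixP[z ->]; exists (w ++ z); rewrite -catA. Qed.

Lemma drop_marked q w : drop q.+1 (s q ++ false :: w) = w.
Proof. by rewrite drop_cat size_s ltnNge leqnSn /= subSnn /= drop0. Qed.

Lemma flip_marked q w : flip q (s q ++ false :: w) = t q ++ true :: w.
Proof. by rewrite /flip drop_marked. Qed.

Lemma flip_cat q x y : q < size x -> flip q (x ++ y) = flip q x ++ y.
Proof.
move=> lt_q; rewrite /flip drop_cat; case: ltnP => [_|le_x]; first by rewrite -catA.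
have -> : q.+1 = size x by apply/eqP; rewrite eqn_leq le_x lt_q.
by rewrite subnn drop0 drop_size -catA.
Qed.

Lemma flip_prefix {q x y} : q < size x -> prefix x y -> prefix (flip q x) (flip q y).
Proof. by move=> lt_q /prefixP[z ->]; rewrite flip_cat ?prefix_prefix. Qed.

Lemma size_flip q x : q < size x -> size (flip q x) = size x.
Proof. by move=> lt_q; rewrite /flip size_cat size_t /= size_drop; lia. Qed.

(* The stem of node i+1, the child of node i./2 in direction odd i, before
   padding; a right child uses clause (b) with the row of the parent's depth. *)
Definition grow (i p : nat) (x : seq bool) : seq bool * nat :=
  if odd i then
    let vq := branch (phi0 (depth i./2)) p (drop p.+1 x) in (x ++ vq.1 ++ [:: false], vq.2)
  else (x ++ [:: false], p).

Lemma grow_prefix i p x : prefix x (grow i p x).1.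
Proof. by rewrite /grow; case: odd => /=; apply: prefix_prefix. Qed.

Lemma grow_marked i {p x} : marked p x -> marked (grow i p x).2 (grow i p x).1.
Proof.
case=> w ->; rewrite /grow; case: odd => /=.
  by exists [::]; rewrite branch_s drop_marked -!catA /= -!catA.
by exists (rcons w false); rewrite cats1 rcons_cat.
Qed.

Lemma grow_flip i {p x} : marked p x -> prefix (flip p x) (flip (grow i p x).2 (grow i p x).1).
Proof.
move=> [w ->]; rewrite /grow; case: odd => /=.
  rewrite drop_marked flip_marked; set vq := branch _ p w.
  have -> : (s p ++ false :: w) ++ vq.1 ++ [:: false] = s vq.2 ++ [:: false].
    by rewrite branch_s -!catA /= -!catA.
  by rewrite flip_marked branch_t prefix_catl // -cat_cons catA prefix_prefix.
by rewrite [flip p (_ ++ [:: false])]flip_cat ?prefix_prefix //; apply: marked_size; exists w.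
Qed.

(* [label x] is the test index of node x. *)
Record stage := Stage { stem : seq bool; label : nat -> nat }.

(* Padding twice puts both the new stem and its flip into [V i]. *)
Definition step (i : nat) (S : stage) : stage :=
  let g := grow i (label S i./2) (stem S) in
  let x := g.1 ++ pad i g.1 in
  Stage (x ++ pad i (flip g.2 x)) (fun j => if j == i.+1 then g.2 else label S j).

Fixpoint stage_at (n : nat) : stage :=
  if n is i.+1 then step i (stage_at i) else Stage [:: false] (fun=> 0).

Definition stem_at (x : nat) : seq bool := stem (stage_at x).
Definition label_at (x : nat) : nat := label (stage_at x) x.
Definition image_at (x : nat) : seq bool := flip (label_at x) (stem_at x).

Lemma label_stage_at i x : x <= i -> label (stage_at i) x = label_at x.
Proof.
elim: i => [|i IHi]; first by rewrite leqn0 => /eqP ->.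
rewrite leq_eqVlt => /orP[/eqP -> //|lt_x] /=.
by rewrite ifN ?IHi // neq_ltn lt_x.
Qed.

Definition grown (i : nat) : seq bool * nat := grow i (label_at i./2) (stem_at i).
Definition padded (i : nat) : seq bool := (grown i).1 ++ pad i (grown i).1.

Lemma stage_atS i : stage_at i.+1 =
  Stage (padded i ++ pad i (flip (grown i).2 (padded i)))
        (fun j => if j == i.+1 then (grown i).2 else label (stage_at i) j).
Proof. by rewrite /= /step label_stage_at ?half_leq_self. Qed.

Lemma label_atS i : label_at i.+1 = (grown i).2.
Proof. by rewrite /label_at stage_atS /= eqxx. Qed.

Lemma stem_atS i : stem_at i.+1 = padded i ++ pad i (flip (label_at i.+1) (padded i)).
Proof. by rewrite /stem_at stage_atS label_atS. Qed.

Lemma stem_at_prefix i : prefix (stem_at i) (stem_at i.+1).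
Proof.
rewrite stem_atS; apply: prefix_catl; apply: prefix_catl; exact: grow_prefix.
Qed.

Lemma stem_at_mono {i j} : i <= j -> prefix (stem_at i) (stem_at j).
Proof. by move=> le_ij; apply: (chain_prefix _ stem_at_prefix le_ij). Qed.

Lemma size_stem_at i : i < size (stem_at i).
Proof.
elim: i => // i IHi; suff : size (stem_at i) < size (stem_at i.+1) by lia.
rewrite stem_atS /padded /grown /grow !size_cat; case: odd => /=; rewrite ?size_cat /=; lia.
Qed.

Lemma stem_at_marked x : marked (label_at x) (stem_at x).
Proof.
elim/ltn_ind: x => [[_|i IH]]; first by exists [::]; rewrite (size0nil (size_s 0)).
have parent_marked : marked (label_at i./2) (stem_at i).
  apply: marked_prefix (IH _ (leq_ltn_trans (half_leq_self i) (ltnSn i))) _.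
  exact: stem_at_mono (half_leq_self i).
rewrite stem_atS label_atS; apply: marked_prefix (grow_marked i parent_marked) _.
by apply: prefix_catl; apply: prefix_prefix.
Qed.

Lemma size_image_at x : size (image_at x) = size (stem_at x).
Proof. exact/size_flip/marked_size/stem_at_marked. Qed.

Lemma stem_at_parent_marked i : marked (label_at i./2) (stem_at i).
Proof. exact (marked_prefix (stem_at_marked _) (stem_at_mono (half_leq_self i))). Qed.

Lemma grown_marked i : marked (grown i).2 (grown i).1.
Proof. exact: grow_marked (stem_at_parent_marked i). Qed.

Lemma grown_prefix i : prefix (grown i).1 (stem_at i.+1).
Proof. by rewrite stem_atS; apply: prefix_catl; apply: prefix_prefix. Qed.

Lemma image_at_prefix i : prefix (image_at i./2) (image_at i.+1).
Proof.
have stem_i := stem_at_mono (half_leq_self i).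
rewrite /image_at label_atS.
apply: prefix_trans (flip_prefix (marked_size (stem_at_marked _)) stem_i) _.
apply: prefix_trans (grow_flip i (stem_at_parent_marked i)) _.
exact: flip_prefix (marked_size (grown_marked i)) (grown_prefix i).
Qed.

Lemma image_atS i :
  image_at i.+1 = flip (label_at i.+1) (padded i) ++ pad i (flip (label_at i.+1) (padded i)).
Proof.
rewrite /image_at {1}stem_atS flip_cat // label_atS.
by apply: marked_size; apply: marked_prefix (grown_marked i) _; apply: prefix_prefix.
Qed.

Definition stem_limit : cantor := chain_limit stem_at.
Definition image_limit (a : cantor) : cantor := chain_limit (fun k => image_at (node a k)).

Lemma stem_limit_V i : V i stem_limit.
Proof.
apply: (padP i (grown i).1); rewrite -/(padded i).
rewrite (restr_chain_limit _ stem_at_prefix size_stem_at i.+1) stem_atS ?take_size_cat //.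
by rewrite size_cat leq_addr.
Qed.

Section Path.

Variable a : cantor.

Definition path_label (k : nat) : nat := label_at (node a k).

Lemma image_path_prefix k : prefix (image_at (node a k)) (image_at (node a k.+1)).
Proof. by have := image_at_prefix (a k + (node a k).*2); rewrite half_bit_double. Qed.

Lemma size_image_path k : k < size (image_at (node a k)).
Proof. by rewrite size_image_at (leq_ltn_trans (node_ge a k)) ?size_stem_at. Qed.

Lemma image_limit_V k : V (a k + (node a k).*2) (image_limit a).
Proof.
set i := a k + (node a k).*2; set y := flip (label_at i.+1) (padded i).
have image_i : image_at (node a k.+1) = y ++ pad i y by rewrite image_atS.
apply: (padP i y).
by rewrite (restr_chain_limit _ image_path_prefix size_image_path k.+1) image_i ?take_size.
Qed.

Lemma path_labelS k : path_label k.+1 =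
  (grow (a k + (node a k).*2) (path_label k) (stem_at (a k + (node a k).*2))).2.
Proof. by rewrite /path_label /= label_atS /grown half_bit_double. Qed.

Lemma path_label_keep k : a k = false -> path_label k.+1 = path_label k.
Proof. by move=> ak; rewrite path_labelS /grow odd_bit_double ak. Qed.

Lemma path_label_branch k : a k = true ->
  phi0 (path_label k.+1).-1 = phi0 k /\ exists w,
    s (path_label k.+1) = s (path_label k) ++ false :: w /\
    t (path_label k.+1) = t (path_label k) ++ true :: w.
Proof.
move=> ak; rewrite path_labelS /grow odd_bit_double half_bit_double depth_node ak /=.
by split; [exact: branch_phi0 | eexists; rewrite branch_s branch_t].
Qed.

Lemma path_branching k :
  (s (path_label k.+1) = s (path_label k) /\ t (path_label k.+1) = t (path_label k)) \/
  exists w, s (path_label k.+1) = s (path_label k) ++ false :: w /\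
            t (path_label k.+1) = t (path_label k) ++ true :: w.
Proof.
case ak: (a k); last by left; rewrite path_label_keep.
by right; have [_] := path_label_branch k ak.
Qed.

Lemma symdiff_limits K x : x < size (stem_at (node a K)) ->
  symdiff stem_limit (image_limit a) x =
  (nth false (stem_at (node a K)) x != nth false (image_at (node a K)) x).
Proof.
move=> lt_x; rewrite /symdiff /stem_limit /image_limit.
rewrite (nth_chain_limit _ stem_at_prefix size_stem_at _ _ lt_x).
by rewrite (nth_chain_limit _ image_path_prefix size_image_path K) ?size_image_at.
Qed.

Lemma symdiff_path_label k : symdiff stem_limit (image_limit a) (path_label k) = true.
Proof.
rewrite (symdiff_limits k) ?(marked_size (stem_at_marked _)) // /image_at.
have [w ->] := stem_at_marked (node a k).
by rewrite flip_marked !nth_cat size_s size_t ltnn subnn.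
Qed.

Lemma symdiff_path_label_inv x :
  symdiff stem_limit (image_limit a) x = true -> exists k, path_label k = x.
Proof.
rewrite (symdiff_limits x) ?(leq_ltn_trans (node_ge a x) (size_stem_at _)) // /image_at.
have [w ->] := stem_at_marked (node a x); rewrite flip_marked !nth_cat size_s size_t.
case: ltngtP => [_|lt_lx|eq_x]; last by exists x; apply: esym.
  have base : s (path_label 0) = t (path_label 0).
    by rewrite (size0nil (size_s _)) (size0nil (size_t _)).
  have sizes k : size (s (path_label k)) = size (t (path_label k)) by rewrite size_s size_t.
  move=> /(branch_points _ _ base sizes path_branching)[k _ <-].
  by exists k; rewrite size_s.
by rewrite -(subnSK lt_lx) eqxx.
Qed.

Lemma path_label_origin k :
  0 < path_label k -> exists2 k0, a k0 = true & path_label k0.+1 = path_label k.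
Proof.
elim: k => [//|k IHk] gt0.
case ak: (a k); first by exists k.
by rewrite path_label_keep // in gt0 *; apply: IHk.
Qed.

Lemma symdiff_branch_row k : a k = true ->
  exists2 y, phi0 y = phi0 k & symdiff stem_limit (image_limit a) y.+1 = true.
Proof.
move=> ak; have [row_k [w [s_k _]]] := path_label_branch k ak.
have gt0 : 0 < path_label k.+1 by rewrite -(size_s (path_label k.+1)) s_k size_cat addnS.
by exists (path_label k.+1).-1; rewrite // prednK // symdiff_path_label.
Qed.

Lemma symdiff_row_branch y : symdiff stem_limit (image_limit a) y.+1 = true ->
  exists2 k, a k = true & phi0 k = phi0 y.
Proof.
move=> /symdiff_path_label_inv[k lab_k].
have [k0 ak0 lab_k0] : exists2 k0, a k0 = true & path_label k0.+1 = path_label k.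
  by apply: path_label_origin; rewrite lab_k.
exists k0 => //; have [<- _] := path_label_branch k0 ak0.
by rewrite lab_k0 lab_k.
Qed.

Lemma in_body_limits : in_body s t stem_limit (image_limit a).
Proof.
move=> r; have le_r : r <= size (stem_at (node a r)).
  exact: ltnW (leq_ltn_trans (node_ge a r) (size_stem_at _)).
rewrite (restr_chain_limit _ stem_at_prefix size_stem_at _ _ le_r).
rewrite (restr_chain_limit _ image_path_prefix size_image_path r) ?size_image_at //.
rewrite /image_at; have [w ->] := stem_at_marked (node a r); rewrite flip_marked.
exact: in_tree_take.
Qed.

End Path.

Lemma image_limit_continuous : continuous_map image_limit.
Proof.
move=> a n; exists n => b ab x lt_x.
by rewrite /image_limit /chain_limit (node_agree ab (ltnW lt_x)).
Qed.

Lemma limits_spec :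
  (forall n, V n stem_limit) /\ (forall a n, exists2 n', n <= n' & V n' (image_limit a)) /\
  continuous_map image_limit /\
  forall a, in_body s t stem_limit (image_limit a) /\
    (forall k, a k = true ->
       exists2 y, phi0 y = phi0 k & symdiff stem_limit (image_limit a) y.+1 = true) /\
    (forall y, symdiff stem_limit (image_limit a) y.+1 = true ->
       exists2 k, a k = true & phi0 k = phi0 y).
Proof.
split; first exact: stem_limit_V.
split.
  move=> a n; exists (a n + (node a n).*2); last exact: image_limit_V.
  by rewrite (leq_trans (node_ge a n)) // -addnn addnA leq_addl.
split; first exact: image_limit_continuous.
move=> a; split; first exact: in_body_limits.
by split; [exact: symdiff_branch_row | exact: symdiff_row_branch].
Qed.

End Construction.

Lemma padding_function (G : cantor -> Prop) (U : nat -> cantor -> Prop) :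
  dense G -> (forall n, open_set (U n)) -> (forall a, G a -> forall n, U n a) ->
  exists pad : nat -> seq bool -> seq bool, forall n rho b,
    restr b (size (rho ++ pad n rho)) = rho ++ pad n rho -> forall m, m <= n -> U m b.
Proof.
move=> G_dense U_open G_U.
have extend (nr : nat * seq bool) : exists w, forall b,
    restr b (size (nr.2 ++ w)) = nr.2 ++ w -> forall m, m <= nr.1 -> U m b.
  apply: dense_open_extension; last exact: open_set_bounded_meet.
  by move=> r; have [b [Gb b_r]] := G_dense r; exists b; split => // m _; apply: G_U.
have [pad padP] := choice _ extend.
by exists (fun n rho => pad (n, rho)) => n rho; apply: (padP (n, rho)).
Qed.

Lemma test_branch_function (s t : nat -> seq bool) : (forall q, size (t q) = q) ->
  (forall m p u, exists v q, s q = s p ++ false :: u ++ v /\ t q = t p ++ true :: u ++ v /\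
     phi0 (size (t p ++ true :: u ++ v) - 1) = m) ->
  exists branch : nat -> nat -> seq bool -> seq bool * nat,
    [/\ forall m p u, s (branch m p u).2 = s p ++ false :: u ++ (branch m p u).1,
        forall m p u, t (branch m p u).2 = t p ++ true :: u ++ (branch m p u).1
      & forall m p u, phi0 (branch m p u).2.-1 = m].
Proof.
move=> size_t test_branch.
have grow (mpu : nat * nat * seq bool) : exists vq : seq bool * nat,
    let: (m, p, u) := mpu in
    [/\ s vq.2 = s p ++ false :: u ++ vq.1, t vq.2 = t p ++ true :: u ++ vq.1
      & phi0 vq.2.-1 = m].
  case: mpu => [[m p] u]; have [v [q [s_q [t_q row_q]]]] := test_branch m p u.
  by exists (v, q); split => //=; rewrite -row_q -t_q size_t subn1.
have [branch branchP] := choice _ grow.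
by exists (fun m p u => branch (m, p, u)); split=> m p u; case: (branchP (m, p, u)).
Qed.

Theorem lemma3p4 (G : cantor -> Prop) (s t : nat -> seq bool) :
  dense G -> Gdelta G -> is_test s t ->
  exists (a0 : cantor) (f : cantor -> cantor),
    G a0 /\ (forall a, G (f a)) /\ continuous_map f /\
    forall a : cantor,
      in_body s t a0 (f a) /\
      forall (tt : seq nat) (m : nat),
        (a (pcode (rcons tt m)) = true ->
           exists m', symdiff a0 (f a) (pcode (rcons tt m')).+1 = true) /\
        (symdiff a0 (f a) (pcode (rcons tt m)).+1 = true ->
           exists m', a (pcode (rcons tt m')) = true).
Proof.
move=> G_dense [U [U_open G_U]] [test_size [test_branch test_parent]].
have size_s q : size (s q) = q := (test_size q).1.
have size_t q : size (t q) = q := (test_size q).2.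
have [pad padP] := padding_function _ _ G_dense U_open (fun a Ga => (G_U a).1 Ga).
have [branch [branch_s branch_t branch_row]] := test_branch_function _ _ size_t test_branch.
have [V_stem [V_image [image_cont image_spec]]] :=
  limits_spec _ _ size_s size_t test_parent _ branch_s branch_t branch_row _ _ padP.
exists (stem_limit t branch pad), (image_limit t branch pad).
split; first by apply/G_U => n; apply: (V_stem n).
split; first by move=> a; apply/G_U => n; have [n' le_n' V_n'] := V_image a n; apply: V_n'.
split => // a; have [body [one_diff diff_one]] := image_spec a; split => // tt m; split.
  move=> /one_diff[y row_y diff_y]; have [m' code_m'] := pcode_rcons_phi0 row_y.
  by exists m'; rewrite code_m'.
move=> /diff_one[k a_k row_k]; have [m' code_m'] := pcode_rcons_phi0 row_k.
by exists m'; rewrite code_m'.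
Qed.
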